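(* For every $k\ge2$ and every $n\ge2$, the families $\mathrm{SLT}_k$ and $\mathrm{REG}_n^Z$ are incomparable (neither is contained in the other); likewise, for every $n\ge 2$, the families $\mathrm{SLT}$ and $\mathrm{REG}_n^Z$ are incomparable.
   Context: Strictly locally testable languages: let $V$ be an alphabet and $k\ge1$. For $B,I,E\subseteq V^k$ and $F\subseteq V^{\le k-1}$, $\mathrm{slt}(B,I,E,F)$ is the language over $V$ consisting of all words in $F$ together with all words $a_1\cdots a_n$ ($a_i\in V$, $n\ge k$) with $a_1\cdots a_k\in B$, $a_{j+1}\cdots a_{j+k}\in I$ for all $1\le j\le n-k-1$, and $a_{n-k+1}\cdots a_n\in E$. $\mathrm{SLT}_k$ is the family of languages of this form and $\mathrm{SLT}=\bigcup_{k\ge1}\mathrm{SLT}_k$. For a regular language $L\subseteq V^*$, $\mathrm{State}(L)$ is the minimum number of states of a deterministic finite automaton over $V$ with total transition function accepting $L$; $\mathrm{REG}_n^Z=\{L\text{ regular}:\mathrm{State}(L)\le n\}$. *)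

From mathcomp Require Import all_boot.
Set Implicit Arguments. Unset Strict Implicit. Unset Printing Implicit Defensive.

(* Membership of w = a_1...a_n in slt(B,I,E,F):
   w in F with |w| <= k-1, or |w| >= k, a_1..a_k in B,
   a_{j+1}..a_{j+k} in I for 1 <= j <= n-k-1, and a_{n-k+1}..a_n in E. *)
Definition slt_mem (V : Type) (k : nat) (B I E F : pred (seq V)) (w : seq V) : bool :=
  ((size w <= k.-1) && F w) ||
  [&& k <= size w, B (take k w),
      all (fun j => I (take k (drop j w))) (iota 1 (size w - k - 1))
    & E (drop (size w - k) w)].

Definition SLT_k (k : nat) (V : finType) (L : seq V -> Prop) : Prop :=
  exists B I E F : pred (seq V),
    [/\ {subset B <= [pred u | size u == k]},
        {subset I <= [pred u | size u == k]},
        {subset E <= [pred u | size u == k]},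
        {subset F <= [pred u | size u <= k.-1]} &
        forall w, L w <-> slt_mem k B I E F w].

Arguments SLT_k : clear implicits.

Definition SLT (V : finType) (L : seq V -> Prop) : Prop :=
  exists k, 1 <= k /\ SLT_k k V L.
Arguments SLT : clear implicits.

Record dfa (V : finType) (m : nat) := Dfa {
  dfa_start : 'I_m;
  dfa_delta : 'I_m -> V -> 'I_m;
  dfa_final : pred 'I_m }.

Definition dfa_accepts (V : finType) (m : nat) (A : dfa V m) (w : seq V) : bool :=
  dfa_final A (foldl (dfa_delta A) (dfa_start A) w).

Definition REG_Z (n : nat) (V : finType) (L : seq V -> Prop) : Prop :=
  exists m, m <= n /\ exists A : dfa V m, forall w, L w <-> dfa_accepts A w.
Arguments REG_Z : clear implicits.

From mathcomp Require Import all_boot zify.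

Set Implicit Arguments.
Unset Strict Implicit.
Unset Printing Implicit Defensive.

(* SLT_k but not REG_n^Z: over an alphabet V with more than n letters, let
   double_end k be the words of length >= k ending in a doubled letter.  It
   is strictly k-testable by its final k-window (slt_mem_suffix).  The words
   a^(k-1), one per letter, form a fooling set separated by the suffixes a,
   so any DFA for it has at least #|V| > n states (fooling_set_not_REG).

   REG_n^Z but not SLT: the unary words of even length are accepted by a
   two-state DFA, but an slt language sees the same windows in a^p for all
   p >= k + 2 (slt_mem_nseq), so it cannot separate a^(2k+2) from a^(2k+3).

   Since the second witness escapes every SLT_k, and the first is already
   in SLT_2, the statement for SLT follows from the same two languages. *)

(* Words of length exactly k: the trivial choice for the sets B, I, E. *)
Definition sized {V : Type} (k : nat) : pred (seq V) := [pred u | size u == k].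

Lemma slt_mem_suffix (V : Type) (k : nat) (E : pred (seq V)) (w : seq V) :
  slt_mem k (sized k) (sized k) E pred0 w = (k <= size w) && E (drop (size w - k) w).
Proof.
rewrite /slt_mem andbF /=; case: (leqP k (size w)) => //= hk.
have window j : j <= size w - k -> sized k (take k (drop j w)).
  by move=> hj; rewrite /sized inE size_takel // size_drop; lia.
have := window 0 (leq0n _); rewrite drop0 => -> /=.
rewrite andb_idl //= => _; apply/allP => j.
by rewrite mem_iota => hj; apply: window; lia.
Qed.

Definition ends_double {V : eqType} (w : seq V) : bool :=
  if rev w is b :: a :: _ then a == b else false.

Lemma ends_double_drop (V : eqType) (m : nat) (w : seq V) :
  2 <= size (drop m w) -> ends_double (drop m w) = ends_double w.
Proof.
rewrite size_drop /ends_double rev_drop -size_rev.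
by case: (rev w) => [|b [|a t]] // h; case: (_ - m) h => [|[|c]].
Qed.

Definition double_end {V : eqType} (k : nat) (w : seq V) : bool :=
  (k <= size w) && ends_double w.

(* double_end k is tested by its final k-window alone, hence in SLT_k. *)
Lemma double_end_SLT (V : finType) (k : nat) :
  2 <= k -> SLT_k k V (double_end k).
Proof.
move=> hk; exists (sized k), (sized k), [pred u | sized k u && ends_double u], pred0.
split=> // [u /andP[] //|w]; rewrite slt_mem_suffix /double_end /=.
case: leqP => //= kw.
have size_suffix : size (drop (size w - k) w) = k by rewrite size_drop; lia.
by rewrite /sized inE size_suffix eqxx ends_double_drop // size_suffix.
Qed.

Lemma fooling_set_not_REG (V X : finType) (L : seq V -> Prop) (u z : X -> seq V) (n : nat) :
  (forall x y, L (u y ++ z x) <-> x = y) -> n < #|X| -> ~ REG_Z n V L.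
Proof.
move=> sep ltnX [m [lemn [A accA]]].
pose state x := foldl (dfa_delta A) (dfa_start A) (u x).
have state_inj : injective state.
  move=> x y eq_xy; apply/sep/accA.
  by rewrite /dfa_accepts foldl_cat -/(state y) -eq_xy -foldl_cat -accA sep.
by have := leq_card state state_inj; rewrite card_ord; lia.
Qed.

Lemma double_end_not_REG (V : finType) (k n : nat) :
  2 <= k -> n < #|V| -> ~ REG_Z n V (double_end k).
Proof.
move=> hk ltnV.
apply: (fooling_set_not_REG (u := fun a => nseq k.-1 a) (z := fun a => [:: a])) => // a b.
rewrite /double_end /ends_double cats1 rev_rcons rev_nseq size_rcons size_nseq.
have -> : k.-1 = k.-2.+1 by lia.
have -> : k <= k.-2.+2 by lia.
by rewrite /= eq_sym; split=> [/eqP|->].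
Qed.

Lemma slt_mem_nseq (T : Type) (k p : nat) (B I E F : pred (seq T)) (a : T) :
  1 <= k <= p ->
  slt_mem k B I E F (nseq p a) =
  [&& B (nseq k a), (k.+2 <= p) ==> I (nseq k a) & E (nseq k a)].
Proof.
case/andP=> hk hkp; rewrite /slt_mem size_nseq (_ : p <= k.-1 = false); last by lia.
rewrite hkp take_nseq // drop_nseq (_ : p - (p - k) = k) /=; last by lia.
congr [&& _, _ & _]; case: leqP => hp /=.
  by rewrite (_ : p - k - 1 = 0) //; lia.
have window j : j <= p - k -> take k (drop j (nseq p a)) = nseq k a.
  by move=> hj; rewrite drop_nseq take_nseq //; lia.
apply/allP/idP => [inner | hI j].
  by rewrite -(window 1); [apply: inner; rewrite mem_iota | ]; lia.
by rewrite mem_iota => hj; rewrite window; last lia.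
Qed.

Lemma slt_mem_nseq_const (T : Type) (k p q : nat) (B I E F : pred (seq T)) (a : T) :
  1 <= k -> k.+2 <= p -> k.+2 <= q ->
  slt_mem k B I E F (nseq p a) = slt_mem k B I E F (nseq q a).
Proof.
by move=> hk hp hq; rewrite !slt_mem_nseq ?hp ?hq // hk; lia.
Qed.

Definition even_length (w : seq unit) : bool := ~~ odd (size w).

(* Two-state DFA toggling its state on every letter (rev_ord swaps 0 and 1). *)
Definition parity_dfa : dfa unit 2 :=
  Dfa ord0 (fun s _ => @rev_ord 2 s) (pred1 ord0).

Lemma parity_dfa_run (w : seq unit) (s : 'I_2) :
  foldl (dfa_delta parity_dfa) s w = if odd (size w) then rev_ord s else s.
Proof.
elim: w s => //= _ w IH s; rewrite IH.
by case: (odd (size w)); rewrite ?rev_ordK.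
Qed.

Lemma even_length_REG (n : nat) : 2 <= n -> REG_Z n unit even_length.
Proof.
move=> hn; exists 2; split=> //; exists parity_dfa => w.
by rewrite /dfa_accepts parity_dfa_run /even_length; case: (odd (size w)).
Qed.

(* No SLT_k language separates a^(2k+2) from a^(2k+3). *)
Lemma even_length_not_SLT (k : nat) : 1 <= k -> ~ SLT_k k unit even_length.
Proof.
move=> hk [B [I [E [F [_ _ _ _ memL]]]]].
have same_mem : slt_mem k B I E F (nseq k.*2.+2 tt) = slt_mem k B I E F (nseq k.*2.+3 tt).
  by apply: slt_mem_nseq_const; lia.
move: (memL (nseq k.*2.+2 tt)) (memL (nseq k.*2.+3 tt)); rewrite same_mem.
rewrite /even_length !size_nseq /= odd_double /= => [[even_mem _] [_ odd_mem]].
by have := odd_mem (even_mem isT).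
Qed.

Theorem mainTheorem9 :
  (forall k n : nat, 2 <= k -> 2 <= n ->
     (exists (V : finType) (L : seq V -> Prop),
        0 < #|V| /\ SLT_k k V L /\ ~ REG_Z n V L) /\
     (exists (V : finType) (L : seq V -> Prop),
        0 < #|V| /\ REG_Z n V L /\ ~ SLT_k k V L)) /\
  (forall n : nat, 2 <= n ->
     (exists (V : finType) (L : seq V -> Prop),
        0 < #|V| /\ SLT V L /\ ~ REG_Z n V L) /\
     (exists (V : finType) (L : seq V -> Prop),
        0 < #|V| /\ REG_Z n V L /\ ~ SLT V L)).
Proof.
have card_big n : n < #|'I_n.+1| by rewrite card_ord.
split=> [k n hk hn | n hn]; split.
- exists 'I_n.+1, (double_end k); split; first exact: leq_ltn_trans (card_big n).
  by split; [exact: double_end_SLT | exact: double_end_not_REG].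
- exists unit, even_length; rewrite card_unit; split=> //.
  by split; [exact: even_length_REG | apply: even_length_not_SLT; lia].
- exists 'I_n.+1, (double_end 2); split; first exact: leq_ltn_trans (card_big n).
  by split; [exists 2; split=> //; exact: double_end_SLT | exact: double_end_not_REG].
- exists unit, even_length; rewrite card_unit; split=> //.
  split; first exact: even_length_REG.
  by case=> k [hk slt_k]; exact: even_length_not_SLT hk slt_k.
Qed.
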